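(* Let $R$ be a commutative ring with $1$ and $I$ a strongly pure ideal of $R$. Then $I$ is a regular ideal, i.e. $I$ is generated by a set of idempotent elements of $R$.
   Context: An ideal $I$ of a commutative ring $R$ is called strongly pure if $\operatorname{Ann}(f)+Rf=R$ for all $f\in I$. An ideal is called regular if it is generated by a set of idempotents. *)

From HB Require Import structures.
From mathcomp Require Import all_boot all_order all_algebra.
Set Implicit Arguments. Unset Strict Implicit. Unset Printing Implicit Defensive.
Import GRing.Theory.
Local Open Scope ring_scope.

Definition is_ideal (R : comPzRingType) (I : R -> Prop) : Prop :=
  [/\ I 0,
      (forall x y, I x -> I y -> I (x + y)) &
      (forall r x, I x -> I (r * x))].

Definition Ann (R : comPzRingType) (f : R) : R -> Prop := fun a => a * f = 0.

Definition principal (R : comPzRingType) (f : R) : R -> Prop :=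
  fun x => exists r, x = r * f.

Definition ideal_sum (R : comPzRingType) (J K : R -> Prop) : R -> Prop :=
  fun x => exists j k, [/\ J j, K k & x = j + k].

Definition strongly_pure (R : comPzRingType) (I : R -> Prop) : Prop :=
  forall f, I f -> forall x : R, ideal_sum (Ann f) (principal f) x.

Definition ideal_gen (R : comPzRingType) (S : R -> Prop) : R -> Prop :=
  fun x => exists (n : nat) (r s : 'I_n -> R),
    (forall i, S (s i)) /\ x = \sum_(i < n) r i * s i.

Definition regular_ideal (R : comPzRingType) (I : R -> Prop) : Prop :=
  exists S : R -> Prop, (forall e, S e -> e * e = e) /\
    (forall x, I x <-> ideal_gen S x).

From mathcomp Require Import all_boot all_order all_algebra.
Import GRing.Theory.
Local Open Scope ring_scope.

(** If [Ann f + R f = R] then [f = r f^2] for some [r]; the element [e := r f]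
    is then an idempotent of [I] with [f = f e], so the idempotents of [I]
    generate [I]. *)

Section StronglyPure.

Context {R : comPzRingType}.

Lemma ann_add_principal_vN_regular (f : R) :
  ideal_sum (Ann f) (principal f) 1 -> exists r, f = r * f * f.
Proof.
move=> [a [_ [af [r ->] a_plus_rf]]]; exists r.
by rewrite -{1}(mul1r f) a_plus_rf mulrDl af add0r.
Qed.

Lemma vN_regular_idempotent (f r : R) :
  f = r * f * f -> (r * f) * (r * f) = r * f /\ f = f * (r * f).
Proof.
move=> frff; split; last by rewrite [f * _]mulrC.
by rewrite mulrA [r * f * r]mulrC -mulrA -frff.
Qed.

Lemma ideal_gen_mul (S : R -> Prop) (r e : R) : S e -> ideal_gen S (r * e).
Proof.
by move=> Se; exists 1%N, (fun=> r), (fun=> e); rewrite big_ord1.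
Qed.

Lemma ideal_gen_sub (I S : R -> Prop) :
  is_ideal I -> (forall e, S e -> I e) -> forall x, ideal_gen S x -> I x.
Proof.
move=> [I0 ID IM] SI x [n [r [s [Ss ->]]]].
by apply: (big_ind I) => // i _; apply/IM/SI.
Qed.

End StronglyPure.

Theorem proposition2p5 (R : comPzRingType) (I : R -> Prop) :
  is_ideal I -> strongly_pure I -> regular_ideal I.
Proof.
move=> idealI pureI.
exists (fun e => I e /\ e * e = e); split; first by move=> e [].
move=> f; split; last by apply: ideal_gen_sub => // e [].
move=> If.
have [r frff] := ann_add_principal_vN_regular _ (pureI f If 1).
have [ee_e f_fe] := vN_regular_idempotent _ _ frff.
have Ie : I (r * f) by case: idealI => _ _; apply.
by rewrite f_fe; apply: ideal_gen_mul.
Qed.
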